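(* Let $C$ be a set and let $L_1,L_2$ be objects of $\mathrm{SList}(C)$. Sending a morphism $L_1\to L_2$ to its associated bijection of index sets defines a bijection between the set of morphisms $L_1\to L_2$ in $\mathrm{SList}(C)$ and the set of bijections $\phi:\{0,\dots,\mathrm{length}(L_2)-1\}\xrightarrow{\sim}\{0,\dots,\mathrm{length}(L_1)-1\}$ such that $L_1[\phi(i)]=L_2[i]$ for all $i$.
   Context: $\mathrm{SList}(C)$ is the category whose objects are finite lists of elements of $C$ and whose morphisms are generated by $\mathrm{sw}_{a,b,l}:a::b::l\to b::a::l$ and $x::_mf:x::l\to x::l'$ (for $f:l\to l'$), subject to: functoriality of $x::_m-$, naturality of $\mathrm{sw}_{a,b,l}$ in $l$, $\mathrm{sw}_{b,a,l}\circ\mathrm{sw}_{a,b,l}=\mathrm{Id}$, and the hexagon relation $\mathrm{sw}_{b,c,a::l}\circ(b::_m\mathrm{sw}_{a,c,l})\circ\mathrm{sw}_{a,b,c::l}=(c::_m\mathrm{sw}_{a,b,l})\circ\mathrm{sw}_{a,c,b::l}\circ(a::_m\mathrm{sw}_{b,c,l})$. $L[i]$ denotes the $i$-th entry (0-indexed) of the list $L$. The bijection associated to a morphism $f:L_1\to L_2$ is the map $\{0,\dots,\mathrm{length}(L_2)-1\}\to\{0,\dots,\mathrm{length}(L_1)-1\}$ obtained by restricting the permutation of $\mathbb{N}$ given by the image of $w(f)$ under the homomorphism $\overline{\mathrm{A}_\infty}\to\mathrm{Perm}(\mathbb{N})$, $s_k\mapsto(k\ k+1)$; here $w$ is the functor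 $\mathrm{SList}(C)\to(\mathrm{B}\overline{\mathrm{A}_\infty})^{\mathrm{op}}$ with $w(\mathrm{sw}_{a,b,l})=s_0$ and $w(x::_mf)$ obtained from $w(f)$ by the shift $s_i\mapsto s_{i+1}$ ($\overline{\mathrm{A}_\infty}$ being the Coxeter group with generators $s_i$, $i\in\mathbb{N}$, relations $s_i^2=e$, $(s_is_{i+1})^3=e$, $(s_is_j)^2=e$ for $|i-j|>1$). Concretely, $\mathrm{sw}_{a,b,l}$ corresponds to the transposition of indices $0$ and $1$, and $x::_mf$ fixes index $0$ and acts as the bijection of $f$ shifted by one on the remaining indices. *)

From mathcomp Require Import all_boot.
Set Implicit Arguments. Unset Strict Implicit. Unset Printing Implicit Defensive.

Section SList.
Variable C : Type.

(* Formal morphism terms of SList(C): generated by identities, composition,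
   the swaps sw_{a,b,l} and the maps x ::_m f. *)
Inductive term : seq C -> seq C -> Type :=
| tid (l : seq C) : term l l
| tcomp (l1 l2 l3 : seq C) : term l2 l3 -> term l1 l2 -> term l1 l3
| tsw (a b : C) (l : seq C) : term [:: a, b & l] [:: b, a & l]
| tcons (x : C) (l l' : seq C) : term l l' -> term (x :: l) (x :: l').

Arguments tcomp {l1 l2 l3}.
Arguments tcons x {l l'}.

(* The congruence on terms generated by the category axioms and the
   relations of SList(C); morphisms of SList(C) are the classes of teq. *)
Inductive teq : forall l1 l2 : seq C, term l1 l2 -> term l1 l2 -> Prop :=
| teq_refl l1 l2 (f : term l1 l2) : teq f f
| teq_sym l1 l2 (f g : term l1 l2) : teq f g -> teq g f
| teq_trans l1 l2 (f g h : term l1 l2) : teq f g -> teq g h -> teq f h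
| teq_comp l1 l2 l3 (g g' : term l2 l3) (f f' : term l1 l2) :
    teq g g' -> teq f f' -> teq (tcomp g f) (tcomp g' f')
| teq_cons x l l' (f f' : term l l') : teq f f' -> teq (tcons x f) (tcons x f')
| teq_assoc l1 l2 l3 l4 (h : term l3 l4) (g : term l2 l3) (f : term l1 l2) :
    teq (tcomp h (tcomp g f)) (tcomp (tcomp h g) f)
| teq_idl l1 l2 (f : term l1 l2) : teq (tcomp (tid l2) f) f
| teq_idr l1 l2 (f : term l1 l2) : teq (tcomp f (tid l1)) f
| teq_cons_id x l : teq (tcons x (tid l)) (tid (x :: l))
| teq_cons_comp x l1 l2 l3 (g : term l2 l3) (f : term l1 l2) :
    teq (tcons x (tcomp g f)) (tcomp (tcons x g) (tcons x f))
| teq_sw_nat a b l l' (f : term l l') :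
    teq (tcomp (tsw a b l') (tcons a (tcons b f)))
        (tcomp (tcons b (tcons a f)) (tsw a b l))
| teq_sw_inv a b l : teq (tcomp (tsw b a l) (tsw a b l)) (tid [:: a, b & l])
| teq_hexagon a b c l :
    teq (tcomp (tsw b c (a :: l)) (tcomp (tcons b (tsw a c l)) (tsw a b (c :: l))))
        (tcomp (tcons c (tsw a b l)) (tcomp (tsw a c (b :: l)) (tcons a (tsw b c l)))).

(* The functor w : SList(C) -> (B A_infty-bar)^op, with a group element
   represented by a word in the generators s_k (k : nat). *)
Fixpoint word l1 l2 (f : term l1 l2) : seq nat :=
  match f with
  | tid _ => [::]
  | tcomp _ _ _ g f => word f ++ word g
  | tsw _ _ _ => [:: 0]
  | tcons _ _ _ f => map S (word f)
  end.

End SList.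

Arguments tcomp {C l1 l2 l3}.
Arguments tcons {C} x {l l'}.
Arguments tid {C}.
Arguments tsw {C}.

Definition transp (k : nat) (i : nat) : nat :=
  if i == k then k.+1 else if i == k.+1 then k else i.

(* The homomorphism from the Coxeter group to Perm(N), s_k |-> (k k+1),
   evaluated on a word: s_{k1} ... s_{kn} |-> (k1 k1+1) o ... o (kn kn+1). *)
Definition eval_word (w : seq nat) : nat -> nat :=
  foldr (fun k acc => transp k \o acc) id w.

(* The permutation of N associated to a morphism term; its restriction to
   {0,..,length L2 - 1} is the bijection associated to f : L1 -> L2. *)
Definition assoc_perm (C : Type) (L1 L2 : seq C) (f : term L1 L2) : nat -> nat :=
  eval_word (word f).

From mathcomp Require Import all_boot.
From Stdlib Require Import Setoid Morphisms Program.Equality.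
From mathcomp Require Import zify.

Set Implicit Arguments.
Unset Strict Implicit.
Unset Printing Implicit Defensive.

(* A term acts on indices through the transpositions (k k+1). Every defining
   relation of SList(C) holds for these permutations (the hexagon becomes the
   braid relation between (0 1) and (1 2)), and each generator preserves list
   entries, so every morphism yields a label-preserving bijection of indices.

   Conversely, let [bring p] be the composite of swaps moving the entry at
   position k of a list to the front. A label-preserving bijection psi is
   realised by the normal form (x ::_m g) o bring p, where p is the position
   psi(0) and g realises the rest of psi (a Lehmer code), and a normal form is
   determined by its bijection. Every term is equivalent to a normal form,
   because normal forms are stable under postcomposition with the generators:
   naturality and the hexagon let a swap pass through two consecutive brings.
   Hence terms with the same bijection are equivalent. *)

(* [cons_perm k s] sends 0 to k and j.+1 to [s j], skipping the value k: it is
   the bijection of (x ::_m g) o bring p for p at position k, g acting as s. *)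
Definition cons_perm (k : nat) (s : nat -> nat) (i : nat) : nat :=
  if i is j.+1 then bump k (s j) else k.

Lemma cons_perm0S s i : cons_perm 0 s i.+1 = (s i).+1.
Proof. by []. Qed.

Lemma cons_perm_comp k s i : cons_perm k id (cons_perm 0 s i) = cons_perm k s i.
Proof. by case: i. Qed.

Lemma transpK k : involutive (transp k).
Proof.
move=> i; rewrite /transp; case: (eqVneq i k) => [->|neq_ik].
  by rewrite eqn_leq ltnn eqxx.
case: (eqVneq i k.+1) => [->|neq_iSk]; first by rewrite eqxx.
by rewrite (negbTE neq_ik) (negbTE neq_iSk).
Qed.

Lemma eval_word_cat w1 w2 i :
  eval_word (w1 ++ w2) i = eval_word w1 (eval_word w2 i).
Proof. by elim: w1 => //= k w ->. Qed.

Lemma eval_word_map_succ w i : eval_word (map S w) i = cons_perm 0 (eval_word w) i.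
Proof.
elim: w i => [|k w IHw] [|i] //=; rewrite IHw // /transp /=.
by rewrite !eqSS; case: ifP => //; case: ifP.
Qed.

Section AssocPerm.
Variable C : Type.
Implicit Types l : seq C.

Lemma assoc_perm_comp l1 l2 l3 (g : term l2 l3) (f : term l1 l2) i :
  assoc_perm (tcomp g f) i = assoc_perm f (assoc_perm g i).
Proof. exact: eval_word_cat. Qed.

Lemma assoc_perm_cons x l l' (f : term l l') i :
  assoc_perm (tcons x f) i = cons_perm 0 (assoc_perm f) i.
Proof. exact: eval_word_map_succ. Qed.

Lemma assoc_perm_sw a b l i : assoc_perm (tsw a b l) i = transp 0 i.
Proof. by []. Qed.

Lemma eq_assoc_perm l1 l2 (f g : term l1 l2) :
  teq f g -> assoc_perm f =1 assoc_perm g.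
Proof.
elim=> {l1 l2 f g} //.
- by move=> l1 l2 f g _ eq_fg i; rewrite eq_fg.
- by move=> l1 l2 f g h _ eq_fg _ eq_gh i; rewrite eq_fg eq_gh.
- by move=> l1 l2 l3 g g' f f' _ eq_g _ eq_f i; rewrite !assoc_perm_comp eq_g eq_f.
- by move=> x l l' f f' _ eq_f [|i]; rewrite !assoc_perm_cons //= eq_f.
- by move=> l1 l2 l3 l4 h g f i; rewrite !assoc_perm_comp.
- by move=> l1 l2 f i; rewrite assoc_perm_comp.
- move=> x l1 l2 l3 g f [|i];
  by rewrite !(assoc_perm_comp, assoc_perm_cons, cons_perm0S).
- move=> a b l l' f [|[|i]];
  by rewrite !(assoc_perm_comp, assoc_perm_cons, assoc_perm_sw, cons_perm0S).
- by move=> a b l i; rewrite assoc_perm_comp !assoc_perm_sw transpK.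
- move=> a b c l [|[|[|i]]];
  by rewrite !(assoc_perm_comp, assoc_perm_cons, assoc_perm_sw, cons_perm0S).
Qed.

End AssocPerm.

Section LabelledBijections.
Variable C : Type.
Implicit Types L : seq C.

Definition labelled_bij L1 L2 (s : nat -> nat) : Prop :=
  [/\ size L1 = size L2,
      forall i, i < size L2 -> s i < size L1,
      forall i j, i < size L2 -> j < size L2 -> s i = s j -> i = j
    & forall d i, i < size L2 -> nth d L1 (s i) = nth d L2 i].

Lemma eq_labelled_bij L1 L2 s t :
  s =1 t -> labelled_bij L1 L2 s -> labelled_bij L1 L2 t.
Proof.
move=> eq_st [size_eq s_lt s_inj s_nth]; split=> // [i|i j|d i]; rewrite -!eq_st.
- exact: s_lt.
- exact: s_inj.
- exact: s_nth.
Qed.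

Lemma labelled_bij_id L : labelled_bij L L id.
Proof. by split. Qed.

Lemma labelled_bij_comp L1 L2 L3 s t :
  labelled_bij L1 L2 s -> labelled_bij L2 L3 t -> labelled_bij L1 L3 (s \o t).
Proof.
move=> [size12 s_lt s_inj s_nth] [size23 t_lt t_inj t_nth]; split=> /=.
- by rewrite size12.
- by move=> i /t_lt /s_lt.
- by move=> i j lt_i lt_j /(s_inj _ _ (t_lt _ lt_i) (t_lt _ lt_j)) /t_inj; apply.
- by move=> d i lt_i; rewrite s_nth ?t_nth ?t_lt.
Qed.

Lemma labelled_bij_cons x L1 L2 s :
  labelled_bij L1 L2 s -> labelled_bij (x :: L1) (x :: L2) (cons_perm 0 s).
Proof.
move=> [size_eq s_lt s_inj s_nth]; split=> /=.
- by rewrite size_eq.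
- by move=> [|i] //= /s_lt.
- by move=> [|i] [|j] //= lt_i lt_j [/s_inj ->].
- by move=> d [|i] //= /s_nth.
Qed.

Lemma labelled_bij_sw a b L : labelled_bij [:: a, b & L] [:: b, a & L] (transp 0).
Proof.
split=> //.
- by move=> [|[|i]].
- by move=> i j _ _ /(can_inj (transpK 0)).
- by move=> d [|[|i]].
Qed.

Lemma assoc_perm_labelled L1 L2 (f : term L1 L2) : labelled_bij L1 L2 (assoc_perm f).
Proof.
elim: f => {L1 L2}.
- exact: labelled_bij_id.
- move=> L1 L2 L3 g lab_g f lab_f.
  apply: (eq_labelled_bij _ (labelled_bij_comp lab_f lab_g)) => i.
  by rewrite assoc_perm_comp.
- exact: labelled_bij_sw.
- move=> x L1 L2 f /(labelled_bij_cons x).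
  by apply: eq_labelled_bij => i; rewrite assoc_perm_cons.
Qed.

End LabelledBijections.

Add Parametric Relation (C : Type) (l1 l2 : seq C) : (term l1 l2) (@teq C l1 l2)
  reflexivity proved by (@teq_refl C l1 l2)
  symmetry proved by (@teq_sym C l1 l2)
  transitivity proved by (@teq_trans C l1 l2) as teq_rel.

Add Parametric Morphism (C : Type) (l1 l2 l3 : seq C) : (@tcomp C l1 l2 l3)
  with signature (@teq C l2 l3) ==> (@teq C l1 l2) ==> (@teq C l1 l3) as tcomp_mor.
Proof. by move=> *; apply: teq_comp. Qed.

Add Parametric Morphism (C : Type) (x : C) (l l' : seq C) : (@tcons C x l l')
  with signature (@teq C l l') ==> (@teq C (x :: l) (x :: l')) as tcons_mor.
Proof. by move=> *; apply: teq_cons. Qed.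

#[local] Hint Resolve teq_refl : core.

Section NormalForms.
Variable C : Type.
Implicit Types l : seq C.

Lemma teq_assocl l1 l2 l3 l4 (h : term l3 l4) (g : term l2 l3) (f : term l1 l2) :
  teq (tcomp (tcomp h g) f) (tcomp h (tcomp g f)).
Proof. by symmetry; apply: teq_assoc. Qed.

(* [pick x l l'] is a position of [x] in [l], and [l'] is [l] with that entry removed. *)
Inductive pick : C -> seq C -> seq C -> Type :=
| pick0 x l : pick x (x :: l) l
| pickS x y l l' : pick x l l' -> pick x (y :: l) (y :: l').

Fixpoint pos x l l' (p : pick x l l') : nat :=
  if p is pickS _ _ _ _ p then (pos p).+1 else 0.

Fixpoint bring x l l' (p : pick x l l') : term l (x :: l') :=
  match p in pick x l l' return term l (x :: l') with
  | pick0 x l => tid (x :: l)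
  | pickS x y l l' p => tcomp (tsw y x l') (tcons y (bring p))
  end.

Lemma size_pick x l l' (p : pick x l l') : size l = (size l').+1.
Proof. by elim: p => //= *; congr _.+1. Qed.

Lemma nth_pick_pos x l l' (p : pick x l l') d : nth d l (pos p) = x.
Proof. by elim: p. Qed.

Lemma nth_pick_bump x l l' (p : pick x l l') d j :
  nth d l (bump (pos p) j) = nth d l' j.
Proof.
elim: p j => [{}x {}l|{}x y {}l {}l' p IHp] [|j] //.
by rewrite bumpS /= IHp.
Qed.

Lemma pick_at k l : k < size l -> exists x l' (p : pick x l l'), pos p = k.
Proof.
elim: l k => [|y l IHl] [|k] //= lt_k; first by exists y, l, (pick0 y l).
have [x [l' [p <-]]] := IHl k lt_k.
by exists x, (y :: l'), (pickS y p).
Qed.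

Lemma pick_pos_inj x1 x2 l l1 l2 (p1 : pick x1 l l1) (p2 : pick x2 l l2) :
  pos p1 = pos p2 -> x1 = x2 /\ l1 = l2 /\ JMeq p1 p2.
Proof.
elim: p1 x2 l2 p2 => [y l0|y z l0 l0' p IHp] x2 l2 p2;
  dependent destruction p2 => //= /eq_add_S /IHp [eq_x [eq_l eq_p]].
by subst.
Qed.

Lemma assoc_perm_bring x l l' (p : pick x l l') :
  assoc_perm (bring p) =1 cons_perm (pos p) id.
Proof.
move=> i; elim: p i => [y l0|y z l0 l0' p IHp] [|[|i]] //=;
  by rewrite assoc_perm_comp assoc_perm_sw assoc_perm_cons /= ?IHp ?bumpS.
Qed.

(* The swap passes through two consecutive [bring]s by naturality and the hexagon. *)
Lemma sw_comp_bring a b l l' l'' (p : pick a l l') (q : pick b l' l'') :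
  exists l1 (p' : pick b l l1) (q' : pick a l1 l''),
    teq (tcomp (tsw a b l'') (tcomp (tcons a (bring q)) (bring p)))
        (tcomp (tcons b (bring q')) (bring p')).
Proof.
elim: p b l'' q => {a l l'}.
  move=> a l' b l'' q; exists (a :: l''), (pickS a q), (pick0 a l'') => /=.
  by rewrite teq_cons_id teq_idl teq_idr.
move=> a y l1 l1' p IHp b l'' q; dependent destruction q => /=.
  exists l1, (pick0 y l1), p => /=.
  by rewrite teq_idr teq_cons_id teq_idl teq_assoc teq_sw_inv teq_idl.
rename x into b, l' into l''.
have [l2 [p' [q' eq_pq]]] := IHp _ _ q.
exists (y :: l2), (pickS y p'), (pickS y q') => /=.
rewrite !teq_cons_comp !teq_assocl.
rewrite (teq_assoc (tcons a (tcons y (bring q)))) -teq_sw_nat teq_assocl.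
rewrite (teq_assoc (tcons a (tsw y b l''))) (teq_assoc (tsw a b (y :: l''))).
rewrite teq_hexagon !teq_assocl -!teq_cons_comp eq_pq teq_cons_comp.
by rewrite (teq_assoc (tsw y b (a :: l''))) teq_sw_nat !teq_assocl.
Qed.

Inductive nf : seq C -> seq C -> Type :=
| nf_nil : nf [::] [::]
| nf_cons x l l' l2 : pick x l l' -> nf l' l2 -> nf l (x :: l2).

Fixpoint nfterm l1 l2 (n : nf l1 l2) : term l1 l2 :=
  match n in nf l1 l2 return term l1 l2 with
  | nf_nil => tid [::]
  | nf_cons x l l' l2 p g => tcomp (tcons x (nfterm g)) (bring p)
  end.

Lemma assoc_perm_nf_cons x l l' l2 (p : pick x l l') (g : nf l' l2) :
  assoc_perm (nfterm (nf_cons p g)) =1 cons_perm (pos p) (assoc_perm (nfterm g)).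
Proof.
by move=> i; rewrite /= assoc_perm_comp assoc_perm_cons assoc_perm_bring cons_perm_comp.
Qed.

Lemma nf_postcomp l1 l2 (f : term l1 l2) :
  forall l0 (n : nf l0 l1),
  exists n' : nf l0 l2, teq (nfterm n') (tcomp f (nfterm n)).
Proof.
elim: f => {l1 l2}.
- by move=> l l0 n; exists n; rewrite teq_idl.
- move=> l1 l2 l3 g IHg f IHf l0 n.
  have [n1 eq_n1] := IHf _ n; have [n2 eq_n2] := IHg _ n1.
  by exists n2; rewrite eq_n2 eq_n1 teq_assoc.
- move=> a b l l0 n.
  dependent destruction n; rename n into m; dependent destruction m.
  have [l2 [p' [q' eq_pq]]] := sw_comp_bring p p0.
  exists (nf_cons p' (nf_cons q' m)) => /=.
  rewrite !teq_cons_comp !teq_assocl (teq_assoc (tsw a b l)) teq_sw_nat.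
  by rewrite teq_assocl eq_pq.
- move=> x l l' f IHf l0 n.
  dependent destruction n; have [m eq_m] := IHf _ n.
  by exists (nf_cons p m) => /=; rewrite eq_m teq_cons_comp teq_assocl.
Qed.

Fixpoint nf_id l : nf l l :=
  if l is x :: l' then nf_cons (pick0 x l') (nf_id l') else nf_nil.

Lemma nfterm_id l : teq (nfterm (nf_id l)) (tid l).
Proof. by elim: l => //= x l IHl; rewrite teq_idr IHl teq_cons_id. Qed.

Lemma exists_nf l1 l2 (f : term l1 l2) : exists n : nf l1 l2, teq (nfterm n) f.
Proof.
have [n eq_n] := nf_postcomp f (nf_id l1).
by exists n; rewrite eq_n nfterm_id teq_idr.
Qed.

Lemma nfterm_inj l1 l2 (n1 n2 : nf l1 l2) :
  (forall i, i < size l2 -> assoc_perm (nfterm n1) i = assoc_perm (nfterm n2) i) ->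
  nfterm n1 = nfterm n2.
Proof.
elim: n1 n2 => [|x l l' l2' p g IHg] n2; dependent destruction n2 => // eq_n.
have := eq_n 0 isT; rewrite !assoc_perm_nf_cons => /pick_pos_inj[_ [eq_l' eq_p]].
subst; rewrite /= (IHg n2) // => i lt_i.
by have := eq_n i.+1 lt_i; rewrite !assoc_perm_nf_cons => /(can_inj (bumpK _)).
Qed.

End NormalForms.

Section Realisation.
Variable C : Type.
Implicit Types L : seq C.

Lemma labelled_bij_unbumpK L1 y L2 s j :
  labelled_bij L1 (y :: L2) s -> j < size L2 ->
  bump (s 0) (unbump (s 0) (s j.+1)) = s j.+1.
Proof.
move=> [_ _ s_inj _] lt_j; rewrite unbumpK // inE.
by apply/eqP => /(s_inj j.+1 0 lt_j isT).
Qed.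

Lemma labelled_bij_unbump x y L1 L1' L2 (p : pick x L1 L1') s :
  labelled_bij L1 (y :: L2) s -> pos p = s 0 ->
  labelled_bij L1' L2 (fun j => unbump (s 0) (s j.+1)).
Proof.
move=> lab_s pos_p; have [size_eq s_lt s_inj s_nth] := lab_s.
have s_bumpK := labelled_bij_unbumpK lab_s.
split.
- by apply: eq_add_S; rewrite -(size_pick p).
- move=> j lt_j; have := s_lt j.+1 lt_j; have := s_lt 0 isT.
  have := s_inj j.+1 0 lt_j isT; rewrite (size_pick p) /unbump.
  by case: ltnP => /=; lia.
- move=> i j lt_i lt_j eq_ij.
  have: s i.+1 = s j.+1 by rewrite -s_bumpK // eq_ij s_bumpK.
  by move/(s_inj i.+1 j.+1 lt_i lt_j) => [].
- by move=> d j lt_j; rewrite -(nth_pick_bump p) pos_p s_bumpK // s_nth.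
Qed.

Lemma labelled_bij_nf L1 L2 s :
  labelled_bij L1 L2 s ->
  exists n : nf L1 L2, forall i, i < size L2 -> assoc_perm (nfterm n) i = s i.
Proof.
elim: L2 L1 s => [|y L2 IHL2] [|x L1] s lab_s; case: (lab_s) => // _ s_lt _ s_nth.
  by exists (nf_nil C).
have [z [L1' [p pos_p]]] := pick_at (s_lt 0 isT).
have eq_zy : z = y by rewrite -(nth_pick_pos p y) pos_p (s_nth y 0).
subst z.
have [g eq_g] := IHL2 _ _ (labelled_bij_unbump lab_s pos_p).
exists (nf_cons p g) => -[|i] lt_i; rewrite assoc_perm_nf_cons //=.
by rewrite eq_g // pos_p (labelled_bij_unbumpK lab_s).
Qed.

Lemma assoc_perm_faithful L1 L2 (f g : term L1 L2) :
  (forall i, i < size L2 -> assoc_perm f i = assoc_perm g i) -> teq f g.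
Proof.
move=> eq_fg; have [nf_f eq_f] := exists_nf f; have [nf_g eq_g] := exists_nf g.
rewrite -eq_f -eq_g (nfterm_inj (n1 := nf_f) (n2 := nf_g)) // => i lt_i.
by rewrite (eq_assoc_perm eq_f) (eq_assoc_perm eq_g) eq_fg.
Qed.

End Realisation.

Section OrdinalBijections.
Variables (C : Type) (L1 L2 : seq C).

Lemma labelled_bij_ord s :
  labelled_bij L1 L2 s ->
  exists phi : 'I_(size L2) -> 'I_(size L1),
    [/\ bijective phi,
        forall i, tnth (in_tuple L1) (phi i) = tnth (in_tuple L2) i
      & forall i, nat_of_ord (phi i) = s i].
Proof.
move=> [size_eq s_lt s_inj s_nth].
exists (fun i : 'I_(size L2) => Ordinal (s_lt _ (ltn_ord i))); split.
- apply: inj_card_bij; last by rewrite !card_ord size_eq.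
  move=> i j /(congr1 val) /= /s_inj eq_ij.
  by apply: val_inj; apply: eq_ij.
- move=> i; have d := tnth (in_tuple L2) i.
  by rewrite !(tnth_nth d) /= s_nth.
- by [].
Qed.

Lemma ord_labelled_bij (phi : 'I_(size L2) -> 'I_(size L1)) :
  bijective phi ->
  (forall i, tnth (in_tuple L1) (phi i) = tnth (in_tuple L2) i) ->
  exists s, labelled_bij L1 L2 s /\ forall i : 'I_(size L2), s i = phi i.
Proof.
move=> bij_phi phi_tnth.
pose s i := if insub i is Some o then nat_of_ord (phi o) else 0.
have sE i (lt_i : i < size L2) : s i = phi (Ordinal lt_i) by rewrite /s insubT.
exists s; split=> [|i]; last by rewrite sE; congr (nat_of_ord (phi _)); apply: val_inj.
split=> [|i lt_i|i j lt_i lt_j|d i lt_i]; rewrite ?sE //.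
- by have := bij_eq_card bij_phi; rewrite !card_ord.
- by move/val_inj/(bij_inj bij_phi)/(congr1 val).
- by have := phi_tnth (Ordinal lt_i); rewrite !(tnth_nth d).
Qed.

End OrdinalBijections.

Theorem corollary2p9 (C : Type) (L1 L2 : seq C) :
  (* the associated bijection of every morphism is a bijection
     phi : {0..len L2 - 1} -> {0..len L1 - 1} with L1[phi i] = L2[i] *)
  (forall f : term L1 L2,
     exists phi : 'I_(size L2) -> 'I_(size L1),
       [/\ bijective phi,
           forall i, tnth (in_tuple L1) (phi i) = tnth (in_tuple L2) i
         & forall i : 'I_(size L2), nat_of_ord (phi i) = assoc_perm f i]) /\
  (* well defined on morphisms (classes of terms) *)
  (forall f g : term L1 L2, teq f g ->
     forall i, i < size L2 -> assoc_perm f i = assoc_perm g i) /\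
  (* injective on morphisms *)
  (forall f g : term L1 L2,
     (forall i, i < size L2 -> assoc_perm f i = assoc_perm g i) -> teq f g) /\
  (* surjective onto the set of such bijections *)
  (forall phi : 'I_(size L2) -> 'I_(size L1),
     bijective phi ->
     (forall i, tnth (in_tuple L1) (phi i) = tnth (in_tuple L2) i) ->
     exists f : term L1 L2, forall i : 'I_(size L2), assoc_perm f i = phi i).
Proof.
split; [|split; [|split]].
- by move=> f; apply/labelled_bij_ord/assoc_perm_labelled.
- by move=> f g /eq_assoc_perm eq_fg i _.
- exact: assoc_perm_faithful.
- move=> phi bij_phi phi_tnth.
  have [s [lab_s sE]] := ord_labelled_bij bij_phi phi_tnth.
  have [n eq_n] := labelled_bij_nf lab_s.
  by exists (nfterm n) => i; rewrite eq_n ?sE.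
Qed.
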